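(* Let $X$ be an $n$-dimensional polyhedral normed space and let $Y \subseteq X$ be a subspace of dimension $k$, where $1 \leq k \leq n-1$. Let $l$ be the minimal number of pairs on which a Chalmers–Metcalf operator for $Y$ can be supported and let $m$ be the minimal number of norming pairs that a minimal projection from $X$ onto $Y$ can have. Then $k(n-k)-m+1 \leq \dim \mathcal{P}_{\min}(X, Y) \leq k(n-k)-l+1$.
   Context: A normed space $X=(\mathbb{R}^n,\|\cdot\|)$ is polyhedral if its unit ball is a convex polytope. A projection onto $Y$ is a linear $P:X\to Y$ with $P|_Y=\mathrm{id}_Y$; $\lambda(Y,X)$ is the infimum of the operator norms of projections and $\mathcal{P}_{\min}(X,Y)$ the set of projections of norm $\lambda(Y,X)$ (minimal projections); $\dim\mathcal{P}_{\min}(X,Y)$ is the affine dimension of this convex subset of $\mathcal{L}(X,X)$. A norming pair for a projection $P$ is a pair $(x,f)\in \mathrm{ext}\,B_X\times \mathrm{ext}\,B_{X^*}$ with $f(P(x))=\|P\|$. For $x\in X$, $f\in X^*$, $x\otimes f$ is the operator $z\mapsto f(z)x$. A Chalmers–Metcalf operator for $Y$ is an operator $T=\sum_{i=1}^{l}\alpha_i x_i\otimes f_i:X\to X$ with $(x_i,f_i)\in\mathrm{ext}\,B_X\times\mathrm{ext}\,B_{X^*}$, $\alpha_i>0$, $\sum_i\alpha_i=1$, $T(Y)\subseteq Y$, and $f_i(P_0(x_i))=\|P_0\|=\lambda(Y,X)$ for all $i$ and some fixed minimal projection $P_0$; it is said to be supported on the $l$ pairs $(x_i,f_i)$. *)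

(* X = 'rV[R]_n (row vectors), operators = 'M[R]_n acting on
   the right (x |-> x *m A), functionals = 'cV[R]_n (f(x) = (x *m f) 0 0). *)
From HB Require Import structures.
From mathcomp Require Import all_boot all_order all_algebra.
From mathcomp Require Import all_classical all_reals.
Set Implicit Arguments. Unset Strict Implicit. Unset Printing Implicit Defensive.
Import Order.TTheory GRing.Theory Num.Theory.
Local Open Scope ring_scope.
Local Open Scope classical_set_scope.

Section Defs.
Variables (R : realType) (n : nat).
Notation vec := 'rV[R]_n.
Notation fct := 'cV[R]_n.
Notation op := 'M[R]_n.

Definition is_norm (N : vec -> R) : Prop :=
  [/\ forall x y, N (x + y) <= N x + N y,
      forall (a : R) x, N (a *: x) = `|a| * N x
    & forall x, N x = 0 -> x = 0].

Definition in_conv_hull (s : seq vec) (x : vec) : Prop :=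
  exists w : 'I_(size s) -> R,
    [/\ forall i, 0 <= w i, (\sum_i w i) = 1
      & x = \sum_i w i *: s`_(nat_of_ord i)].

Definition polyhedral (N : vec -> R) : Prop :=
  exists s : seq vec, forall x, N x <= 1 <-> in_conv_hull s x.

Definition unit_ball (N : vec -> R) : set vec := [set x | N x <= 1].

Definition fapp (f : fct) (x : vec) : R := (x *m f) 0 0.

Definition dual_ball (N : vec -> R) : set fct :=
  [set f | forall x, N x <= 1 -> `|fapp f x| <= 1].

Definition extreme {V : lmodType R} (C : set V) (x : V) : Prop :=
  C x /\ forall y z (t : R), C y -> C z -> 0 < t < 1 ->
    x = t *: y + (1 - t) *: z -> y = z.

Definition opnorm (N : vec -> R) (A : op) : R :=
  sup [set N (x *m A) | x in unit_ball N].

(* P is a projection onto Y (Y given by its row space) *)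
Definition is_proj (Y : op) (P : op) : Prop :=
  (P <= Y)%MS /\ forall x : vec, (x <= Y)%MS -> x *m P = x.

Definition lambda (N : vec -> R) (Y : op) : R :=
  inf [set opnorm N P | P in is_proj Y].

Definition Pmin (N : vec -> R) (Y : op) : set op :=
  [set P | is_proj Y P /\ opnorm N P = lambda N Y].

(* the rank-one operator x (x) f : z |-> f(z) x *)
Definition tens (x : vec) (f : fct) : op := f *m x.

Definition norming_pair (N : vec -> R) (P : op) (x : vec) (f : fct) : Prop :=
  [/\ extreme (unit_ball N) x, extreme (dual_ball N) f
    & fapp f (x *m P) = opnorm N P].

Definition num_norming_pairs (N : vec -> R) (P : op) (c : nat) : Prop :=
  exists s : seq (vec * fct),
    uniq s /\ size s = c /\
    forall x f, (x, f) \in s <-> norming_pair N P x f.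

Definition CM_supported (N : vec -> R) (Y : op) (l : nat) : Prop :=
  exists (x : 'I_l -> vec) (f : 'I_l -> fct) (alpha : 'I_l -> R) (P0 : op),
    [/\ forall i, extreme (unit_ball N) (x i) /\ extreme (dual_ball N) (f i),
        forall i, 0 < alpha i,
        (\sum_i alpha i) = 1,
        (Y *m (\sum_i alpha i *: tens (x i) (f i))%R <= Y)%MS
      & Pmin N Y P0 /\ forall i, fapp (f i) (x i *m P0) = opnorm N P0].

Definition affdim (S : set op) (d : nat) : Prop :=
  exists A0 : op, S A0 /\
  exists W : 'M[R]_(n * n),
    [/\ forall A, S A -> (mxvec (A - A0) <= W)%MS,
        forall W' : 'M[R]_(n * n),
          (forall A, S A -> (mxvec (A - A0) <= W')%MS) -> (W <= W')%MS
      & \rank W = d].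

End Defs.

From HB Require Import structures.
From mathcomp Require Import all_boot all_order all_algebra.
From mathcomp Require Import all_classical all_reals.
From mathcomp Require Import ring lra zify.
Set Implicit Arguments. Unset Strict Implicit. Unset Printing Implicit Defensive.
Import Order.TTheory GRing.Theory Num.Theory.
Local Open Scope ring_scope.

(* Fix a minimal projection [P0] and a Chalmers-Metcalf operator
   [T = sum_i a_i x_i (x) f_i]. The differences of projections onto [Y] are the
   operators [D] with [D(X) <= Y] and [D|Y = 0]; they form a space of dimension
   [k (n - k)], parametrized linearly and injectively by [pdiff]. As [T(Y) <= Y],
   [tr (D T) = 0] for all of them, so [tr (P T) = ||P0||] for every minimal [P];
   since [tr (P T)] is an average of the values [f_i (P x_i) <= ||P||], every pair
   of [T] is a norming pair of every minimal projection.
   Hence the direction space of [Pmin] lies in the kernel of the evaluation of [D]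
   at the [l] pairs of [T], and this evaluation has rank at least [l - 1]: a kernel
   vector [b] with [sum b = 0] makes [sum_i b_i x_i (x) f_i] preserve [Y], and
   shifting the weights [a] along [b] gives a Chalmers-Metcalf operator on fewer
   pairs. Conversely, if [D] vanishes at the [m] norming pairs of a minimal [P],
   then [||P + t D|| <= ||P||] for small [t > 0], because the unit ball and its
   dual have finitely many extreme points; so the kernel of the evaluation at
   these [m] pairs lies in the direction space, and that evaluation has rank at
   most [m - 1], the weights of [T] giving a linear relation among its columns. *)

Lemma exists_pos_lbound (R : realDomainType) (I : finType) (P : pred I) (F : I -> R) :
  (forall i, P i -> 0 < F i) -> exists2 d, 0 < d & forall i, P i -> d <= F i.
Proof.
move=> F_gt0; have [[i Pi]|noP] := pselect (exists i, P i); last first.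
  by exists 1 => // i Pi; case: noP; exists i.
by case: (arg_minP F Pi) => j Pj Fj; exists (F j); [apply: F_gt0 | ].
Qed.

Lemma sumr_if_neq (V : zmodType) (I : finType) (F : I -> V) j :
  \sum_i (if i == j then 0 else F i) = \sum_i F i - F j.
Proof.
rewrite (bigD1 j) //= [in RHS](bigD1 j) //= eqxx add0r addrAC subrr add0r.
by apply: eq_bigr => i /negbTE ->.
Qed.

Lemma weight_le1 (R : numDomainType) (I : finType) (w : I -> R) i :
  (forall j, 0 <= w j) -> \sum_j w j = 1 -> w i <= 1.
Proof. by move=> w_ge0 <-; rewrite (bigD1 i) //= lerDl sumr_ge0. Qed.

Lemma weighted_mean_eq_max (R : numFieldType) (I : finType) (a v : I -> R) c :
  (forall i, 0 < a i) -> \sum_i a i = 1 -> (forall i, v i <= c) ->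
  \sum_i a i * v i = c -> forall i, v i = c.
Proof.
move=> a_gt0 a1 v_le mean_c; have : \sum_i a i * (c - v i) = 0.
  under eq_bigr do rewrite mulrBr.
  by rewrite sumrB -mulr_suml a1 mul1r mean_c subrr.
have gap_ge0 i : true -> 0 <= a i * (c - v i).
  by move=> _; apply: mulr_ge0; [apply: ltW | rewrite subr_ge0].
move/(psumr_eq0P gap_ge0) => gap0 i; apply/eqP; rewrite eq_sym -subr_eq0.
by have /eqP := gap0 i isT; rewrite mulf_eq0 gt_eqF.
Qed.

Lemma exists_shrink_weights (R : realFieldType) (I : finType) (a b : I -> R) :
  (forall i, 0 < a i) -> (exists i, b i != 0) -> \sum_i b i = 0 ->
  exists t, (forall i, 0 <= a i - t * b i) /\ exists j, a j - t * b j = 0.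
Proof.
move=> a_gt0 [i0 bi0] b0; have [j1 bj1] : exists j, 0 < b j.
  apply/not_existsP => b_le0.
  have Nb_ge0 i : true -> 0 <= - b i by move=> _; rewrite oppr_ge0 leNgt; apply/negP/b_le0.
  have /(psumr_eq0P Nb_ge0)/(_ i0 isT)/eqP : \sum_i - b i = 0 by rewrite sumrN b0 oppr0.
  by rewrite oppr_eq0 (negbTE bi0).
have [j bj j_min] := arg_minP (P := fun j => 0 < b j) (fun j => a j / b j) bj1.
exists (a j / b j); split; last by exists j; rewrite divfK ?subrr ?gt_eqF.
move=> i; rewrite subr_ge0; have [bi_gt0|bi_le0] := ltP 0 (b i).
  by have := j_min i bi_gt0; rewrite ler_pdivlMr.
apply: le_trans (ltW (a_gt0 i)); apply: mulr_ge0_le0 => //.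
by apply: divr_ge0; apply: ltW.
Qed.

Lemma sum_enum_val (V : zmodType) (I : finType) (J : {set I}) (F : I -> V) :
  (forall i, i \notin J -> F i = 0) -> \sum_(j < #|J|) F (enum_val j) = \sum_i F i.
Proof.
move=> F0; rewrite -(big_enum_val _ (A := mem J)) big_mkcond; apply: eq_bigr => i _.
by case: ifP => // /negbT /F0 ->.
Qed.

Lemma not_row_full_ker (F : fieldType) p m (A : 'M[F]_(p, m)) :
  ~~ row_full A -> exists2 h : 'cV_m, h != 0 & A *m h = 0.
Proof.
move=> A_nfull; have : (cokermx A)^T != 0.
  rewrite trmx_eq0 -mxrank_eq0 mxrank_coker subn_eq0 -ltnNge.
  by rewrite ltn_neqAle A_nfull rank_leq_col.
case/rowV0Pn => _ /submxP[w ->] wA_neq0; exists (w *m (cokermx A)^T)^T.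
  by rewrite trmx_eq0.
by rewrite trmx_mul trmxK mulmxA mulmx_coker mul0mx.
Qed.

Lemma mul_rV_lin1_linear (F : fieldType) p q (f : 'rV[F]_p -> 'rV[F]_q) :
  linear f -> forall u, u *m lin1_mx f = f u.
Proof.
move=> f_lin; pose fL : {linear 'rV[F]_p -> 'rV[F]_q} :=
  HB.pack f (GRing.isLinear.Build F _ _ _ f f_lin).
exact: (mul_rV_lin1 fL).
Qed.

Lemma mxtrace_delta_mul (F : fieldType) m p (i : 'I_m) (j : 'I_p) (A : 'M[F]_(p, m)) :
  \tr (delta_mx i j *m A) = A j i.
Proof.
rewrite /mxtrace (bigD1 i) //= big1 => [|l li]; last first.
  by rewrite mxE big1 // => l' _; rewrite mxE (negbTE li) mul0r.
rewrite mxE (bigD1 j) //= big1 => [|l lj]; last by rewrite mxE (negbTE lj) andbF mul0r.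
by rewrite mxE !eqxx mul1r !addr0.
Qed.

Lemma exists_min_subspace (F : fieldType) m (Q : 'M[F]_m -> Prop) :
  Q 1%:M -> (forall A B, Q A -> Q B -> Q (A :&: B)%MS) ->
  exists W, Q W /\ forall W', Q W' -> (W <= W')%MS.
Proof.
move=> Q1 Qcap; have exQ : exists r, `[< exists W, Q W /\ \rank W = r >].
  by exists (\rank (1%:M : 'M[F]_m)); apply/asboolP; exists 1%:M.
case: (ex_minnP exQ) => r /asboolP[W [QW <-]] W_min; exists W; split => // W' QW'.
have WW'_le : (\rank W <= \rank (W :&: W')%MS)%N.
  by apply: W_min; apply/asboolP; exists (W :&: W')%MS; split => //; apply: Qcap.
apply: submx_trans (capmxSr W W'); rewrite -(mxrank_leqif_sup (capmxSl W W')).2.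
by rewrite eqn_leq WW'_le mxrankS ?capmxSl.
Qed.

Lemma rank_lt_mul_eq0 (F : fieldType) p m (A : 'M[F]_(p, m)) (g : 'cV_m) :
  g != 0 -> A *m g = 0 -> (\rank A < m)%N.
Proof.
move=> g_neq0 Ag0; rewrite ltn_neqAle rank_leq_col andbT.
by apply: contra g_neq0 => A_full; apply/eqP/(row_full_inj A_full); rewrite Ag0 mulmx0.
Qed.

Lemma exists_ker_sum_eq0 (F : fieldType) p l (A : 'M[F]_(p, l)) :
  (\rank A + 1 < l)%N -> exists2 b : 'rV_l, b != 0 & b *m A^T = 0 /\ \sum_j b 0 j = 0.
Proof.
move=> rankA; set K := kermx A^T; set H := kermx (const_mx 1 : 'cV[F]_l).
have : (K :&: H)%MS != 0.
  rewrite -mxrank_eq0 -lt0n; have := mxrank_sum_cap K H.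
  have := rank_leq_col (K + H)%MS; have := rank_leq_col (const_mx 1 : 'cV[F]_l).
  rewrite /K /H !mxrank_ker mxrank_tr; lia.
case/rowV0Pn => b; rewrite sub_capmx => /andP[/sub_kermxP bK /sub_kermxP bH] b_neq0.
exists b => //; split => //; move/matrixP: bH => /(_ 0 0); rewrite !mxE => bH.
by rewrite -[RHS]bH; apply: eq_bigr => j _; rewrite mxE mulr1.
Qed.

(** * Linear functionals and Farkas' lemma *)

Section Functional.
Variables (R : realType) (n : nat).
Implicit Types (x y : 'rV[R]_n) (f g : 'cV[R]_n).

Lemma fappE f x : fapp f x = \sum_j x 0 j * f j 0.
Proof. by rewrite /fapp mxE. Qed.

Lemma fappDl f x y : fapp f (x + y) = fapp f x + fapp f y.
Proof. by rewrite /fapp mulmxDl mxE. Qed.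

Lemma fappZl f a x : fapp f (a *: x) = a * fapp f x.
Proof. by rewrite /fapp -scalemxAl mxE. Qed.

Lemma fappNl f x : fapp f (- x) = - fapp f x.
Proof. by rewrite -scaleN1r fappZl mulN1r. Qed.

Lemma fappBl f x y : fapp f (x - y) = fapp f x - fapp f y.
Proof. by rewrite fappDl fappNl. Qed.

Lemma fapp0l f : fapp f 0 = 0.
Proof. by rewrite /fapp mul0mx mxE. Qed.

Lemma fapp_suml f I (r : seq I) (P : pred I) (F : I -> 'rV_n) :
  fapp f (\sum_(i <- r | P i) F i) = \sum_(i <- r | P i) fapp f (F i).
Proof. by rewrite /fapp mulmx_suml summxE. Qed.

Lemma fappDr f g x : fapp (f + g) x = fapp f x + fapp g x.
Proof. by rewrite /fapp mulmxDr mxE. Qed.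

Lemma fappZr f a x : fapp (a *: f) x = a * fapp f x.
Proof. by rewrite /fapp -scalemxAr mxE. Qed.

Lemma fappNr f x : fapp (- f) x = - fapp f x.
Proof. by rewrite -scaleN1r fappZr mulN1r. Qed.

Lemma fappBr f g x : fapp (f - g) x = fapp f x - fapp g x.
Proof. by rewrite fappDr fappNr. Qed.

Lemma fapp0r x : fapp 0 x = 0.
Proof. by rewrite /fapp mulmx0 mxE. Qed.

Lemma fapp_tr f x (A : 'M_n) : fapp f (x *m A) = \tr (A *m tens x f).
Proof. by rewrite /tens mulmxA mxtrace_mulC /mxtrace big_ord1 mulmxA. Qed.

Lemma fapp_trmx_gt0 x : x != 0 -> 0 < fapp x^T x.
Proof.
move=> /eqP x_neq0; rewrite fappE.
have [j xj] : exists j, x 0 j != 0.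
  apply/existsP; apply: contra_notT x_neq0 => /existsPn xE.
  by apply/rowP => j; rewrite mxE; apply/eqP/negPn.
rewrite (bigD1 j) //= ltr_pwDl ?mxE -?expr2 ?exprn_even_gt0 //.
by apply: sumr_ge0 => i _; rewrite mxE -expr2 sqr_ge0.
Qed.

Definition in_cone q (a : 'I_q -> 'rV[R]_n) x :=
  exists2 mu : 'I_q -> R, forall i, 0 <= mu i & x = \sum_i mu i *: a i.

Lemma widen_ord_max q (i : 'I_q) : widen_ord (leqnSn q) i = lift ord_max i.
Proof. by apply: val_inj; rewrite /= /bump leqNgt ltn_ord. Qed.

Lemma in_cone_recr q (a : 'I_q.+1 -> 'rV[R]_n) x (mu : 'I_q -> R) c :
  (forall i, 0 <= mu i) -> 0 <= c ->
  x = \sum_i mu i *: a (widen_ord (leqnSn q) i) + c *: a ord_max -> in_cone a x.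
Proof.
move=> mu_ge0 c_ge0 ->.
exists (fun i => if unlift ord_max i is Some j then mu j else c).
  by move=> i; case: (unlift _ _).
rewrite big_ord_recr /= unlift_none; congr (_ + _); apply: eq_bigr => i _.
by rewrite widen_ord_max liftK.
Qed.

Lemma farkas q (a : 'I_q -> 'rV[R]_n) x : ~ in_cone a x ->
  exists2 y : 'cV_n, forall i, fapp y (a i) <= 0 & 0 < fapp y x.
Proof.
elim: q a x => [|q IH] a x xNcone.
  exists x^T => [[] //|]; apply: fapp_trmx_gt0; apply/eqP => x0; apply: xNcone.
  by exists (fun=> 0); rewrite ?big_ord0.
pose a' i := a (widen_ord (leqnSn q) i); pose b := a ord_max.
have [y ya' yx] : exists2 y, forall i, fapp y (a' i) <= 0 & 0 < fapp y x.
  apply: IH => -[mu mu_ge0 xE]; apply: xNcone.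
  by apply: (in_cone_recr mu_ge0 (lexx 0)); rewrite scale0r addr0.
have [yb|c_gt0] := lerP (fapp y b) 0.
  exists y => // i; case: (unliftP ord_max i) => [j ->|->] //.
  by rewrite -widen_ord_max; apply: ya'.
set c := fapp y b in c_gt0; have c_neq0 : c != 0 by rewrite gt_eqF.
(* Fourier-Motzkin: project the problem along [b] onto the hyperplane [y = 0]. *)
pose pr v := c *: v - fapp y v *: b.
have [z za' zx] : exists2 z, forall i, fapp z (pr (a' i)) <= 0 & 0 < fapp z (pr x).
  apply: IH => -[mu mu_ge0 prxE]; apply: xNcone.
  pose S := \sum_i mu i * fapp y (a' i).
  apply: (in_cone_recr (c := (fapp y x - S) / c) mu_ge0).
    apply: divr_ge0; last exact: ltW.
    rewrite subr_ge0; apply: le_trans (ltW yx).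
    by apply: sumr_le0 => i _; apply: mulr_ge0_le0.
  apply: (@scalerI _ _ c) => //; rewrite scalerDr scalerA mulrC divfK //.
  have -> : c *: x = pr x + fapp y x *: b by rewrite /pr subrK.
  rewrite -[RHS]/(c *: \sum_i mu i *: a' i + (fapp y x - S) *: b) prxE.
  have -> : \sum_i mu i *: pr (a' i) = c *: \sum_i mu i *: a' i - S *: b.
    rewrite /S scaler_suml scaler_sumr -sumrB; apply: eq_bigr => i _.
    by rewrite scalerBr !scalerA mulrC.
  by rewrite scalerBl [RHS]addrA addrAC.
have zE v : fapp (z - (fapp z b / c) *: y) v = fapp z (pr v) / c.
  by rewrite fappBr fappZr /pr fappBl !fappZl; field.
exists (z - (fapp z b / c) *: y) => [i|]; rewrite zE; last by rewrite divr_gt0.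
case: (unliftP ord_max i) => [j ->|->].
  by rewrite -widen_ord_max mulr_le0_ge0 ?za' // invr_ge0 ltW.
by rewrite /pr -/c subrr fapp0l mul0r.
Qed.

End Functional.

(** * Polyhedral norms *)

Section Norm.
Variables (R : realType) (n : nat) (N : 'rV[R]_n -> R).
Hypothesis hN : is_norm N.

Lemma nrmD x y : N (x + y) <= N x + N y. Proof. by case: hN => + _ _; apply. Qed.
Lemma nrmZ a x : N (a *: x) = `|a| * N x. Proof. by case: hN => _ + _; apply. Qed.
Lemma nrm0_eq0 x : N x = 0 -> x = 0. Proof. by case: hN => _ _; apply. Qed.

Lemma nrm0 : N 0 = 0.
Proof. by rewrite -(scale0r (0 : 'rV_n)) nrmZ normr0 mul0r. Qed.

Lemma nrmN x : N (- x) = N x.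
Proof. by rewrite -scaleN1r nrmZ normrN normr1 mul1r. Qed.

Lemma nrm_ge0 x : 0 <= N x.
Proof. by have := nrmD x (- x); rewrite subrr nrm0 nrmN; lra. Qed.

Lemma nrm_gt0 x : x != 0 -> 0 < N x.
Proof.
move=> x_neq0; rewrite lt_neqAle nrm_ge0 andbT eq_sym.
by apply: contra_neq x_neq0 => /nrm0_eq0.
Qed.

Lemma nrmZ_ge0 a x : 0 <= a -> N (a *: x) = a * N x.
Proof. by move=> a_ge0; rewrite nrmZ ger0_norm. Qed.

Lemma nrm_normalize x : x != 0 -> N ((N x)^-1 *: x) = 1.
Proof.
by move=> x_neq0; rewrite nrmZ_ge0 ?invr_ge0 ?nrm_ge0 // mulVf // gt_eqF // nrm_gt0.
Qed.

Lemma nrm_sum I (r : seq I) (P : pred I) (w : I -> R) (F : I -> 'rV_n) :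
  (forall i, P i -> 0 <= w i) ->
  N (\sum_(i <- r | P i) w i *: F i) <= \sum_(i <- r | P i) w i * N (F i).
Proof.
move=> w_ge0; elim/big_rec2: _ => [|i y1 y2 Pi IH]; first by rewrite nrm0.
by apply: le_trans (nrmD _ _) _; rewrite nrmZ_ge0 ?w_ge0 // lerD2l.
Qed.

Lemma dual_ball_abs f x : dual_ball N f -> `|fapp f x| <= N x.
Proof.
move=> f_dual; have [->|x_neq0] := eqVneq x 0; first by rewrite fapp0l normr0 nrm0.
have := f_dual ((N x)^-1 *: x); rewrite nrm_normalize // lexx => /(_ isT).
rewrite fappZl normrM ger0_norm ?invr_ge0 ?nrm_ge0 //.
by rewrite ler_pdivrMl ?nrm_gt0 // mulr1.
Qed.

Lemma dual_ball_le f x : dual_ball N f -> fapp f x <= N x.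
Proof. by move=> f_dual; apply: le_trans (ler_norm _) (dual_ball_abs x f_dual). Qed.

End Norm.

Section ConvexHull.
Variables (R : realType) (V : lmodType R) (s : seq V).
Local Notation M := (size s).
Implicit Types (S : {set 'I_M}) (w : 'I_M -> R).

Definition hull_on S (x : V) : Prop :=
  exists w : 'I_M -> R, [/\ forall i, 0 <= w i, forall i, i \notin S -> w i = 0,
    \sum_i w i = 1 & x = \sum_i w i *: s`_i].

Lemma hull_onS S S' x : S \subset S' -> hull_on S x -> hull_on S' x.
Proof.
move=> /fintype.subsetP sSS' [w [w_ge0 wS w1 ->]]; exists w; split => // i iS'.
by apply: wS; apply: contra iS' => /sSS'.
Qed.

Lemma hull_on_vertex S j : j \in S -> hull_on S s`_j.
Proof.
move=> jS; exists (fun i => (i == j)%:R); split.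
- by move=> i; case: (_ == _).
- by move=> i; case: eqP => // -> /negP.
- by rewrite (bigD1 j) //= eqxx big1 ?addr0 // => i /negbTE ->.
- by rewrite (bigD1 j) //= eqxx scale1r big1 ?addr0 // => i /negbTE ->; rewrite scale0r.
Qed.

Lemma hull_on_drop S j w :
  (forall i, 0 <= w i) -> (forall i, i \notin S -> w i = 0) -> \sum_i w i = 1 ->
  w j < 1 -> hull_on (S :\ j) ((1 - w j)^-1 *: (\sum_i w i *: s`_i - w j *: s`_j)).
Proof.
move=> w_ge0 wS w1 wj_lt1; have wj_neq1 : 1 - w j != 0 by rewrite subr_eq0 gt_eqF.
exists (fun i => (1 - w j)^-1 * (if i == j then 0 else w i)); split.
- by move=> i; apply: mulr_ge0; [rewrite invr_ge0 subr_ge0 ltW | case: ifP].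
- move=> i; rewrite in_setD1 negb_and negbK.
  by case: eqP => [_|_ /wS ->]; rewrite ?mulr0.
- by rewrite -mulr_sumr sumr_if_neq w1 mulVf.
- rewrite -sumr_if_neq scaler_sumr; apply: eq_bigr => i _.
  by case: ifP; rewrite ?mulr0 ?scaler0 ?scale0r ?scalerA.
Qed.

Lemma hull_on_remove S j : hull_on (S :\ j) s`_j ->
  forall x, hull_on S x -> hull_on (S :\ j) x.
Proof.
move=> [v [v_ge0 vS v1 vE]] x [w [w_ge0 wS w1 ->]].
have vj0 : v j = 0 by apply: vS; rewrite in_setD1 eqxx.
exists (fun i => (if i == j then 0 else w i) + w j * v i); split.
- by move=> i; apply: addr_ge0; [case: ifP | apply: mulr_ge0].
- move=> i; rewrite in_setD1 negb_and negbK; case: eqP => [->|_] /= iS.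
    by rewrite vj0 mulr0 addr0.
  by rewrite wS ?vS ?mulr0 ?addr0 // in_setD1 (negbTE iS) andbF.
- by rewrite big_split /= sumr_if_neq -mulr_sumr v1 w1 mulr1 subrK.
- rewrite [RHS](eq_bigr (fun i => (if i == j then 0 else w i *: s`_i) + w j *: (v i *: s`_i))).
    by rewrite big_split /= sumr_if_neq -scaler_sumr -vE subrK.
  by move=> i _; rewrite scalerDl scalerA; case: ifP; rewrite ?scale0r.
Qed.

Lemma weights_vertex w j : (forall i, 0 <= w i) -> \sum_i w i = 1 -> w j = 1 ->
  \sum_i w i *: s`_i = s`_j.
Proof.
move=> w_ge0 w1 wj1; have : \sum_(i | i != j) w i = 0.
  by move: w1; rewrite (bigD1 j) //= wj1; lra.
move/psumr_eq0P => w_neqj; rewrite (bigD1 j) //= wj1 scale1r big1 ?addr0 //.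
by move=> i ij; rewrite w_neqj ?scale0r.
Qed.

Lemma extreme_hull_on_vertex S j : j \in S -> ~ hull_on (S :\ j) s`_j ->
  extreme (hull_on S) s`_j.
Proof.
move=> jS sjNhull; split; first exact: hull_on_vertex.
move=> y z t [a [a_ge0 aS a1 ->]] [b [b_ge0 bS b1 ->]] /andP[t_gt0 t_lt1] sjE.
pose c i := t * a i + (1 - t) * b i.
have c_ge0 i : 0 <= c i by rewrite addr_ge0 ?mulr_ge0 ?subr_ge0 // ltW.
have cS i : i \notin S -> c i = 0 by move=> iS; rewrite /c aS ?bS // !mulr0 addr0.
have c1 : \sum_i c i = 1 by rewrite big_split /= -!mulr_sumr a1 b1 !mulr1 subrKC.
have cE : s`_j = \sum_i c i *: s`_i.
  rewrite sjE !scaler_sumr -big_split /=; apply: eq_bigr => i _.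
  by rewrite !scalerA -scalerDl.
(* Otherwise [s_j] would be a convex combination of the other vertices. *)
have cj1 : c j = 1.
  apply: contra_notP sjNhull => /eqP cj_neq1.
  have cj_lt1 : c j < 1 by rewrite lt_neqAle cj_neq1 weight_le1.
  have := hull_on_drop c_ge0 cS c1 cj_lt1.
  by rewrite -cE -{1}[s`_j]scale1r -scalerBl scalerA mulVf ?scale1r // subr_eq0 gt_eqF.
have := weight_le1 j a_ge0 a1; have := weight_le1 j b_ge0 b1.
move: cj1; rewrite /c => cj1 bj_le1 aj_le1.
have aj1 : a j = 1 by nra.
have bj1 : b j = 1 by nra.
by rewrite (weights_vertex a_ge0 a1 aj1) (weights_vertex b_ge0 b1 bj1).
Qed.

Lemma hull_on_extreme_vertices : exists S,
  (forall x, hull_on S x <-> hull_on [set: 'I_M] x) /\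
  forall j, j \in S -> extreme (hull_on S) s`_j.
Proof.
suff ind S : (forall x, hull_on S x <-> hull_on [set: 'I_M] x) -> exists S',
    (forall x, hull_on S' x <-> hull_on [set: 'I_M] x) /\
    forall j, j \in S' -> extreme (hull_on S') s`_j.
  by apply: (ind [set: 'I_M]).
have [k] := ubnP #|S|; elim: k S => // k IH S cardS hullS.
have [S_ext|] := pselect (forall j, j \in S -> extreme (hull_on S) s`_j).
  by exists S.
move=> /existsNP[j /not_implyP[jS sjNext]].
have sj_hull : hull_on (S :\ j) s`_j.
  by apply: contra_notP sjNext; apply: extreme_hull_on_vertex.
apply: (IH (S :\ j)); first by move: cardS; rewrite (cardsD1 j S) jS.
move=> x; split => [/(hull_onS (subD1set S j))/hullS //|/hullS].
exact: hull_on_remove sj_hull x.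
Qed.

End ConvexHull.

Arguments hull_on {R V} s S x.

Section Polytope.
Variables (R : realType) (n : nat) (N : 'rV[R]_n -> R) (s : seq 'rV[R]_n).
Hypotheses (hN : is_norm N) (hs : forall x, N x <= 1 <-> in_conv_hull s x).
Local Notation M := (size s).
Implicit Types (x u : 'rV[R]_n) (f g h : 'cV[R]_n) (A P : 'M[R]_n).

Lemma in_conv_hullE x : in_conv_hull s x <-> hull_on s [set: 'I_M] x.
Proof.
split=> [[w [w_ge0 w1 ->]]|[w [w_ge0 _ w1 ->]]]; last by exists w.
by exists w; split=> // i; rewrite inE.
Qed.

Lemma vertex_in_ball (i : 'I_M) : N s`_i <= 1.
Proof. by apply/hs/in_conv_hullE; apply: hull_on_vertex; rewrite inE. Qed.

Lemma nrm_mulmx_le_vertices A x : N x <= 1 -> N (x *m A) <= \sum_(i < M) N (s`_i *m A).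
Proof.
move=> /hs[w [w_ge0 w1 ->]]; rewrite mulmx_suml.
under eq_bigr do rewrite -scalemxAl.
apply: le_trans (nrm_sum hN _ _ (fun i _ => w_ge0 i)) _; apply: ler_sum => i _.
by rewrite ler_piMl ?(nrm_ge0 hN) ?(weight_le1 _ w_ge0).
Qed.

Lemma opnorm_ub A x : N x <= 1 -> N (x *m A) <= opnorm N A.
Proof.
move=> x_ball; apply: ub_le_sup; last by exists x.
exists (\sum_(i < M) N (s`_i *m A)) => _ [y y_ball <-].
exact: nrm_mulmx_le_vertices.
Qed.

Lemma opnorm_le A c : (forall x, N x <= 1 -> N (x *m A) <= c) -> opnorm N A <= c.
Proof.
move=> Ac; apply: ge_sup; last by move=> _ [y y_ball <-]; apply: Ac.
by exists (N (0 *m A)), 0 => //; rewrite /unit_ball /= (nrm0 hN).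
Qed.

Lemma opnorm_ge0 A : 0 <= opnorm N A.
Proof.
apply: le_trans (opnorm_ub A (x := 0) _); first by rewrite mul0mx (nrm0 hN).
by rewrite (nrm0 hN) ler01.
Qed.

Lemma lambda_le_opnorm (Y : 'M_n) P : is_proj Y P -> lambda N Y <= opnorm N P.
Proof.
move=> P_proj; apply: ge_inf; last by exists P.
by exists 0 => _ [Q _ <-]; apply: opnorm_ge0.
Qed.

Lemma Pmin_opnorm_le (Y : 'M_n) P0 P :
  Pmin N Y P0 -> is_proj Y P -> opnorm N P <= opnorm N P0 -> Pmin N Y P.
Proof.
move=> [_ P0_min] P_proj P_le; split => //; apply/eqP.
by rewrite eq_le lambda_le_opnorm // -P0_min P_le.
Qed.

Lemma vertices_sep h : (forall i : 'I_M, fapp h s`_i = 0) -> h = 0.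
Proof.
move=> h_s; have h_ball x : N x <= 1 -> fapp h x = 0.
  by move=> /hs[w [_ _ ->]]; rewrite fapp_suml big1 // => i _; rewrite fappZl h_s mulr0.
apply/colP => j; have e_neq0 : delta_mx 0 j != 0 :> 'rV[R]_n.
  by rewrite -mxrank_eq0 mxrank_delta.
have := h_ball ((N (delta_mx 0 j))^-1 *: delta_mx 0 j).
rewrite nrm_normalize // lexx fappZl => /(_ isT) /eqP.
rewrite mulf_eq0 invr_eq0 gt_eqF ?(nrm_gt0 hN) //= => /eqP.
by rewrite /fapp -rowE !mxE => ->.
Qed.

(* The unit ball of the dual is the polytope {f | f (+-s_i) <= 1}. *)
Definition svert (i : 'I_(M + M)) : 'rV[R]_n :=
  match fintype.split i with inl j => s`_j | inr j => - s`_j end.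

Lemma svert_lshift j : svert (lshift M j) = s`_j.
Proof. by rewrite /svert -[lshift _ _]/(unsplit (inl _)) unsplitK. Qed.

Lemma svert_rshift j : svert (rshift M j) = - s`_j.
Proof. by rewrite /svert -[rshift _ _]/(unsplit (inr _)) unsplitK. Qed.

Lemma svert_in_ball i : N (svert i) <= 1.
Proof. by rewrite /svert; case: fintype.split => j; rewrite ?(nrmN hN) vertex_in_ball. Qed.

Lemma dual_ballE f : dual_ball N f <-> forall i, fapp f (svert i) <= 1.
Proof.
split=> [f_dual i|f_le1 x /hs[w [w_ge0 w1 ->]]].
  exact: le_trans (dual_ball_le hN _ f_dual) (svert_in_ball i).
rewrite fapp_suml; apply: le_trans (ler_norm_sum _ _ _) _; rewrite -w1.
apply: ler_sum => i _; rewrite fappZl normrM ger0_norm // ler_piMr // ler_norml.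
have := f_le1 (rshift M i); have := f_le1 (lshift M i).
by rewrite svert_lshift svert_rshift fappNl lerNl => -> ->.
Qed.

Definition active f := [set i | fapp f (svert i) == 1].

Definition active_mx f : 'M[R]_(M + M, n) :=
  \matrix_i (if i \in active f then svert i else 0).

Lemma active_mx_mul_eq0 f h :
  active_mx f *m h = 0 <-> forall i, i \in active f -> fapp h (svert i) = 0.
Proof.
have Afh i : (active_mx f *m h) i 0 = if i \in active f then fapp h (svert i) else 0.
  rewrite mxE; case: ifP => iA.
    by rewrite fappE; apply: eq_bigr => j _; rewrite mxE iA.
  by apply: big1 => j _; rewrite mxE iA mxE mul0r.
split=> [/colP Afh0 i iA|h0]; first by have := Afh0 i; rewrite Afh iA mxE.
by apply/colP => i; rewrite Afh mxE; case: ifP => // /h0.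
Qed.

Lemma active_mx_uniq f g : row_full (active_mx f) ->
  (forall i, i \in active f -> fapp g (svert i) = 1) -> g = f.
Proof.
move=> f_full gA; apply/eqP; rewrite -subr_eq0; apply/eqP.
apply: (row_full_inj f_full); rewrite mulmx0; apply/active_mx_mul_eq0 => i iA.
by rewrite fappBr gA //; move: iA; rewrite inE => /eqP ->; rewrite subrr.
Qed.

Lemma row_full_extreme_dual f : dual_ball N f -> row_full (active_mx f) ->
  extreme (dual_ball N) f.
Proof.
move=> f_dual f_full; split => // g g' t g_dual g'_dual /andP[t_gt0 t_lt1] fE.
apply/eqP; rewrite -subr_eq0; apply/eqP.
apply: (row_full_inj f_full); rewrite mulmx0; apply/active_mx_mul_eq0 => i.
have := (dual_ballE g).1 g_dual i; have := (dual_ballE g').1 g'_dual i.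
rewrite inE fE fappBr fappDr !fappZr => g'_le1 g_le1 /eqP gg'1.
have g1 : fapp g (svert i) = 1 by nra.
have g'1 : fapp g' (svert i) = 1 by nra.
by rewrite g1 g'1 subrr.
Qed.

Lemma extreme_dual_row_full f : extreme (dual_ball N) f -> row_full (active_mx f).
Proof.
move=> [f_dual f_ext]; apply: contraT => /not_row_full_ker[h h_neq0 /active_mx_mul_eq0 hA].
have f_le1 := (dual_ballE f).1 f_dual.
(* [f +- e h] stays in the dual ball for small [e], so [f] is their midpoint. *)
have [e e_gt0 e_le] : exists2 e : R, 0 < e & forall i, i \notin active f ->
    e <= (1 - fapp f (svert i)) / (`|fapp h (svert i)| + 1).
  apply: exists_pos_lbound => i iNA; apply: divr_gt0; last by rewrite ltr_wpDl.
  by rewrite subr_gt0 lt_neqAle f_le1 andbT; rewrite inE in iNA.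
have f_eh_dual c : `|c| = 1 -> dual_ball N (f + (c * e) *: h).
  move=> c1; apply/dual_ballE => i; rewrite fappDr fappZr.
  have [iA|iNA] := boolP (i \in active f); first by rewrite hA // mulr0 addr0 f_le1.
  have := e_le i iNA; rewrite ler_pdivlMr ?ltr_wpDl // => e_bound.
  have : c * fapp h (svert i) <= `|fapp h (svert i)|.
    by apply: le_trans (ler_norm _) _; rewrite normrM c1 mul1r.
  by have := normr_ge0 (fapp h (svert i)); nra.
have half : 0 < (2^-1 : R) < 1 by apply/andP; split; lra.
have fE : f = 2^-1 *: (f + (1 * e) *: h) + (1 - 2^-1) *: (f + (-1 * e) *: h).
  by apply/colP => i; rewrite !mxE; field.
have /colP f_eh := f_ext _ _ _ (f_eh_dual 1 (normr1 R)) (f_eh_dual (-1) (normrN1 R)) half fE.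
suff /eqP : h = 0 by rewrite (negbTE h_neq0).
apply/colP => i; rewrite mxE.
have : e * h i 0 = 0 by have := f_eh i; rewrite !mxE; lra.
by move/eqP; rewrite mulf_eq0 gt_eqF //= => /eqP.
Qed.

Lemma dual_ball_step f u : dual_ball N f -> ~~ row_full (active_mx f) ->
  exists g, [/\ dual_ball N g, fapp f u <= fapp g u & (#|~: active g| < #|~: active f|)%N].
Proof.
move=> f_dual /not_row_full_ker[h0 h0_neq0 /active_mx_mul_eq0 h0A].
have f_le1 := (dual_ballE f).1 f_dual.
pose h := if 0 <= fapp h0 u then h0 else - h0.
have hA i : i \in active f -> fapp h (svert i) = 0.
  by move=> iA; rewrite /h; case: ifP; rewrite ?fappNr h0A ?oppr0.
have hu : 0 <= fapp h u.
  by rewrite /h; case: ifP => [//|/negbT]; rewrite -ltNge fappNr oppr_ge0 => /ltW.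
have [i0 hi0] : exists i, 0 < fapp h (svert i).
  have h_neq0 : h != 0 by rewrite /h; case: ifP; rewrite ?oppr_eq0.
  have [j hj] : exists j : 'I_M, fapp h s`_j != 0.
    apply/existsP; apply: contraR h_neq0 => /existsPn h_s0.
    by apply/eqP/vertices_sep => j; move: (h_s0 j); rewrite negbK => /eqP.
  case: (ltrgtP (fapp h s`_j) 0) => [hj_lt0|hj_gt0|/eqP]; last by rewrite (negbTE hj).
    by exists (rshift M j); rewrite svert_rshift fappNl oppr_gt0.
  by exists (lshift M j); rewrite svert_lshift.
(* Move along [h] until the first new constraint becomes active. *)
pose F i := (1 - fapp f (svert i)) / fapp h (svert i).
have [i1 hi1 i1_min] := arg_minP (P := fun i => 0 < fapp h (svert i)) F hi0.
have i1NA : i1 \notin active f by apply: contraTN hi1 => /hA ->; rewrite ltxx.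
have F_ge0 : 0 <= F i1 by rewrite divr_ge0 ?subr_ge0 ?f_le1 ?ltW.
exists (f + F i1 *: h); split.
- apply/dual_ballE => i; rewrite fappDr fappZr.
  have [hi_gt0|hi_le0] := ltP 0 (fapp h (svert i)).
    by have := i1_min i hi_gt0; rewrite ler_pdivlMr //; lra.
  have : F i1 * fapp h (svert i) <= 0 by apply: mulr_ge0_le0.
  by have := f_le1 i; lra.
- by rewrite fappDr fappZr lerDl mulr_ge0.
- apply: proper_card; apply/properP; split.
    apply/fintype.subsetP => i; rewrite !inE; apply: contra => iA.
    by rewrite fappDr fappZr hA ?inE // mulr0 addr0.
  exists i1; first by rewrite inE.
  by rewrite !inE negbK fappDr fappZr /F (divfK (lt0r_neq0 hi1)) addrC subrK.
Qed.

Lemma dual_ball_vertex f u : dual_ball N f ->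
  exists g, [/\ dual_ball N g, row_full (active_mx g) & fapp f u <= fapp g u].
Proof.
have [k] := ubnP #|~: active f|; elim: k f => // k IH f f_card f_dual.
have [f_full|f_nfull] := boolP (row_full (active_mx f)); first by exists f.
have [g [g_dual fg g_card]] := dual_ball_step u f_dual f_nfull.
have [g' [g'_dual g'_full gg']] := IH g (leq_trans g_card f_card) g_dual.
by exists g'; split => //; apply: le_trans gg'.
Qed.

Lemma support_functional u : exists2 f, dual_ball N f & N u <= fapp f u.
Proof.
have [->|u_neq0] := eqVneq u 0.
  exists 0; last by rewrite (nrm0 hN) fapp0l.
  by apply/dual_ballE => i; rewrite fapp0r ler01.
have [v v1 uE] : exists2 v, N v = 1 & u = N u *: v.
  exists ((N u)^-1 *: u); first exact: nrm_normalize.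
  by rewrite scalerA divff ?scale1r // gt_eqF ?(nrm_gt0 hN).
(* In the cone, [v] would give [(1 + sum mu) v] as a combination of vertices with
   total weight [sum mu], contradicting [N v = 1]. *)
have v_Ncone : ~ in_cone (fun i => svert i - v) v.
  move=> [mu mu_ge0 vE]; pose S := \sum_i mu i.
  have S_ge0 : 0 <= S by apply: sumr_ge0.
  have : N ((1 + S) *: v) <= S.
    have -> : (1 + S) *: v = \sum_i mu i *: svert i.
      rewrite scalerDl scale1r {1}vE /S scaler_suml -big_split /=.
      by apply: eq_bigr => i _; rewrite scalerBr subrK.
    apply: le_trans (nrm_sum hN _ _ (fun i _ => mu_ge0 i)) _.
    by apply: ler_sum => i _; rewrite ler_piMr ?svert_in_ball.
  by rewrite nrmZ_ge0 ?addr_ge0 // v1 mulr1; lra.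
have [y y_le0 y_gt0] := farkas v_Ncone.
exists ((fapp y v)^-1 *: y).
  apply/dual_ballE => i; rewrite fappZr ler_pdivrMl // mulr1.
  by have := y_le0 i; rewrite fappBl subr_le0.
by rewrite {2}uE fappZr fappZl mulrCA mulVf ?mulr1 // gt_eqF.
Qed.

Lemma extreme_support_functional u :
  exists2 g, extreme (dual_ball N) g & N u <= fapp g u.
Proof.
have [f f_dual fu] := support_functional u.
have [g [g_dual g_full fg]] := dual_ball_vertex u f_dual.
by exists g; [apply: row_full_extreme_dual | apply: le_trans fg].
Qed.

Lemma extreme_dual_finite : exists G : {set 'I_(M + M)} -> 'cV[R]_n,
  forall g, extreme (dual_ball N) g -> G (active g) = g.
Proof.
exists (fun S => xget 0 (fun g => extreme (dual_ball N) g /\ active g = S)).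
move=> g g_ext; case: xgetP => [g' _ [_ g'A]|]; last by move/(_ g); case.
apply: (active_mx_uniq (extreme_dual_row_full g_ext)) => i.
by rewrite -g'A inE => /eqP.
Qed.

Lemma extreme_dual_gap (I : finType) (u : I -> 'rV[R]_n) c : exists2 d, 0 < d &
  forall i g, extreme (dual_ball N) g -> fapp g (u i) < c -> d <= c - fapp g (u i).
Proof.
have [G GK] := extreme_dual_finite.
pose F (iS : I * {set 'I_(M + M)}) := c - fapp (G iS.2) (u iS.1).
have [d d_gt0 d_le] := @exists_pos_lbound _ _ (fun iS => 0 < F iS) F (fun _ => id).
exists d => // i g g_ext gu_lt.
by have := d_le (i, active g); rewrite /F /= GK // subr_gt0; apply.
Qed.

Lemma opnorm_perturb_le P D :
  (forall y h, norming_pair N P y h -> fapp h (y *m D) = 0) ->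
  exists2 t, 0 < t & opnorm N (P + t *: D) <= opnorm N P.
Proof.
move=> D0; set c := opnorm N P.
have [S [S_ball S_ext]] := hull_on_extreme_vertices s.
have ballE : unit_ball N = hull_on s S.
  by apply/funext => y; apply/propext; rewrite /unit_ball /= hs in_conv_hullE S_ball.
have [d d_gt0 d_le] := extreme_dual_gap (fun i : 'I_M => s`_i *m P) c.
pose C := \sum_(i < M) N (s`_i *m D) + 1.
have NC (i : 'I_M) : N (s`_i *m D) <= C.
  by rewrite /C (bigD1 i) //= -addrA lerDl addr_ge0 ?sumr_ge0 // => j _; apply: nrm_ge0.
have C_gt0 : 0 < C by rewrite /C ltr_wpDl ?sumr_ge0 // => i _; apply: nrm_ge0.
exists (d / C); first exact: divr_gt0.
(* At an extreme vertex, a supporting extreme functional either norms [P]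
   or leaves the gap [d]. *)
have vertex_le (i : 'I_M) : i \in S -> N (s`_i *m (P + (d / C) *: D)) <= c.
  move=> iS; have [g g_ext g_ge] := extreme_support_functional (s`_i *m (P + (d / C) *: D)).
  apply: le_trans g_ge _; rewrite mulmxDr fappDl -scalemxAr fappZl.
  have g_dual : dual_ball N g by case: g_ext.
  have gP_le : fapp g (s`_i *m P) <= c.
    exact: le_trans (dual_ball_le hN _ g_dual) (opnorm_ub _ (vertex_in_ball i)).
  have [gP_lt|gP_ge] := ltP (fapp g (s`_i *m P)) c.
    have := d_le i g g_ext gP_lt; have := dual_ball_le hN (s`_i *m D) g_dual.
    have := NC i; have : d / C * C = d by rewrite divfK ?gt_eqF.
    have : 0 <= d / C by rewrite divr_ge0 ?ltW.
    by nra.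
  have gP : fapp g (s`_i *m P) = c by apply/eqP; rewrite eq_le gP_le gP_ge.
  by rewrite D0 ?mulr0 ?addr0 //; split; rewrite // ballE; apply: S_ext.
apply: opnorm_le => y /hs/in_conv_hullE/S_ball[w [w_ge0 wS w1 ->]].
rewrite mulmx_suml; under eq_bigr do rewrite -scalemxAl.
apply: le_trans (nrm_sum hN _ _ (fun i _ => w_ge0 i)) _.
rewrite -[c]mul1r -w1 mulr_suml; apply: ler_sum => i _.
by have [iS|iNS] := boolP (i \in S); [rewrite ler_wpM2l ?vertex_le | rewrite wS // !mul0r].
Qed.

End Polytope.

(** * Differences of projections *)

Section ProjectionDifferences.
Variables (F : fieldType) (n : nat) (Y : 'M[F]_n).
Local Notation k := (\rank Y).
Local Notation r := (\rank (kermx Y^T)).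

Definition annmx : 'M[F]_(n, r) := (row_base (kermx Y^T))^T.

Lemma mulmx_annmx : Y *m annmx = 0.
Proof.
apply: trmx_inj; rewrite trmx_mul trmxK trmx0; apply/sub_kermxP.
by rewrite eq_row_base.
Qed.

Lemma row_base_annmx : row_base Y *m annmx = 0.
Proof.
have /mulmxKpV <- : (row_base Y <= Y)%MS by rewrite eq_row_base.
by rewrite -mulmxA mulmx_annmx mulmx0.
Qed.

Lemma rank_kermx_tr : r = (n - k)%N.
Proof. by rewrite mxrank_ker mxrank_tr. Qed.

Lemma annmx_eq0_sub (u : 'rV_n) : u *m annmx = 0 -> (u <= Y)%MS.
Proof.
move=> uA0; set K := kermx Y^T.
have YK : (Y <= kermx K^T)%MS.
  by apply/sub_kermxP; apply: trmx_inj; rewrite trmx_mul trmxK mulmx_ker trmx0.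
have uK : (u <= kermx K^T)%MS.
  apply/sub_kermxP; apply: trmx_inj; rewrite trmx_mul trmxK trmx0.
  have RKu0 : row_base K *m u^T = 0 by rewrite -[row_base K]trmxK -trmx_mul uA0 trmx0.
  have /mulmxKpV <- : (K <= row_base K)%MS by rewrite eq_row_base.
  by rewrite -(mulmxA _ (row_base K)) RKu0 mulmx0.
(* [Y] and the annihilator of [K] both have rank [k]. *)
have rankK : \rank (kermx K^T) = k.
  by rewrite mxrank_ker mxrank_tr rank_kermx_tr subKn // rank_leq_col.
by apply: submx_trans uK _; rewrite -(mxrank_leqif_sup YK).2 rankK.
Qed.

Definition pdiff (M : 'M[F]_(r, k)) : 'M[F]_n := annmx *m M *m row_base Y.

Lemma pdiff_sub M : (pdiff M <= Y)%MS.
Proof. by rewrite (submx_trans (submxMl _ _)) ?eq_row_base. Qed.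

Lemma mul_pdiff M : Y *m pdiff M = 0.
Proof. by rewrite /pdiff !mulmxA mulmx_annmx !mul0mx. Qed.

Lemma pdiff_inj : injective pdiff.
Proof.
have [C YC] := row_freeP (row_base_free Y).
have [B BA] : exists B, B *m annmx = 1%:M.
  have [B BK] := row_freeP (row_base_free (kermx Y^T)).
  by exists B^T; rewrite -trmx_mul BK trmx1.
have pdiffK M : B *m pdiff M *m C = M.
  by rewrite /pdiff mulmxA (mulmxA B) BA mul1mx -mulmxA YC mulmx1.
by move=> M M' eqM; rewrite -(pdiffK M) eqM pdiffK.
Qed.

Lemma pdiffP (X : 'M[F]_n) : (X <= Y)%MS -> Y *m X = 0 -> exists M, X = pdiff M.
Proof.
move=> XY YX0; pose X' := X *m pinvmx (row_base Y).
have XE : X = X' *m row_base Y by rewrite mulmxKpV ?eq_row_base.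
have YX'0 : Y *m X' = 0.
  by apply/eqP; rewrite -(mulmx_free_eq0 _ (row_base_free Y)) -mulmxA -XE YX0.
have X'K : (X'^T <= row_base (kermx Y^T))%MS.
  by rewrite eq_row_base; apply/sub_kermxP; rewrite -trmx_mul YX'0 trmx0.
exists (X'^T *m pinvmx (row_base (kermx Y^T)))^T.
by rewrite /pdiff /annmx -trmx_mul mulmxKpV // trmxK -XE.
Qed.

Lemma mxtrace_pdiff_mul M (T : 'M[F]_n) : (Y *m T <= Y)%MS -> \tr (pdiff M *m T) = 0.
Proof.
move=> YT; have YbT : (row_base Y *m T <= row_base Y)%MS.
  by rewrite eq_row_base (submx_trans _ YT) // submxMr ?eq_row_base.
have /mulmxKpV YbTE := YbT; set G := _ *m pinvmx _ in YbTE.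
rewrite /pdiff -mulmxA -YbTE mxtrace_mulC -mulmxA (mulmxA (row_base Y)).
by rewrite row_base_annmx mul0mx mulmx0 mxtrace0.
Qed.

Lemma pdiff_trace_eq0 (T : 'M[F]_n) :
  (forall M, \tr (pdiff M *m T) = 0) -> (Y *m T <= Y)%MS.
Proof.
move=> trT0; have YbTA0 : row_base Y *m T *m annmx = 0.
  apply/matrixP => a c; rewrite [RHS]mxE -(trT0 (delta_mx c a)) /pdiff.
  rewrite -[in RHS]mulmxA [in RHS]mxtrace_mulC [in RHS]mulmxA.
  by rewrite mxtrace_mulC mxtrace_delta_mul.
have YTA0 : Y *m T *m annmx = 0.
  have /mulmxKpV YE : (Y <= row_base Y)%MS by rewrite eq_row_base.
  have -> : Y *m T = Y *m pinvmx (row_base Y) *m (row_base Y *m T) by rewrite mulmxA YE.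
  by rewrite -mulmxA YbTA0 mulmx0.
by apply/row_subP => i; apply: annmx_eq0_sub; rewrite -row_mul YTA0 row0.
Qed.

Local Notation p := (r * k)%N.

Definition pdiffv (z : 'rV[F]_p) : 'M[F]_n := pdiff (vec_mx z).

Lemma pdiffv_linear : linear pdiffv.
Proof.
by move=> a u v; rewrite /pdiffv /pdiff linearP mulmxDr mulmxDl -scalemxAr -scalemxAl.
Qed.

Definition pdiff_mx : 'M[F]_(p, n * n) := lin1_mx (mxvec \o pdiffv).

Lemma mul_pdiff_mx z : z *m pdiff_mx = mxvec (pdiffv z).
Proof. by apply: mul_rV_lin1_linear => a u v; rewrite /= pdiffv_linear linearP. Qed.

Lemma pdiff_mx_free : row_free pdiff_mx.
Proof.
rewrite -kermx_eq0; apply/eqP/row_matrixP => i; rewrite row0.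
have /eqP : row i (kermx pdiff_mx) *m pdiff_mx = 0 by rewrite -row_mul mulmx_ker row0.
have pdiff0 : pdiff 0 = 0 by rewrite /pdiff mulmx0 mul0mx.
rewrite mul_pdiff_mx mxvec_eq0 /pdiffv -pdiff0 => /eqP /pdiff_inj /(congr1 mxvec).
by rewrite vec_mxK linear0.
Qed.

End ProjectionDifferences.

Arguments pdiff {F n} Y M.
Arguments pdiffv {F n} Y z.

Section ProjectionsOntoY.
Variables (R : realType) (n : nat) (Y : 'M[R]_n).
Local Notation p := (\rank (kermx Y^T) * \rank Y)%N.

Lemma is_proj_diff P Q : is_proj Y P -> is_proj Y Q -> exists M, Q - P = pdiff Y M.
Proof.
move=> [PY PidY] [QY QidY]; apply: pdiffP; first by rewrite addmx_sub ?eqmx_opp.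
by apply/row_matrixP => i; rewrite row_mul mulmxBr PidY ?QidY ?row_sub // row0 subrr.
Qed.

Lemma is_proj_add_pdiff P M : is_proj Y P -> is_proj Y (P + pdiff Y M).
Proof.
move=> [PY PidY]; split => [|x xY]; first by rewrite addmx_sub ?pdiff_sub.
have xD0 : x *m pdiff Y M = 0.
  by rewrite -(mulmxKpV xY) -(mulmxA (x *m pinvmx Y)) mul_pdiff mulmx0.
by rewrite mulmxDr xD0 addr0 PidY.
Qed.

Lemma mxtrace_mul_tens_sum l (x : 'I_l -> 'rV[R]_n) (f : 'I_l -> 'cV[R]_n) (a : 'I_l -> R)
    (A : 'M[R]_n) :
  \tr (A *m \sum_i a i *: tens (x i) (f i)) = \sum_i a i * fapp (f i) (x i *m A).
Proof.
rewrite mulmx_sumr linear_sum; apply: eq_bigr => i _.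
by rewrite -scalemxAr linearZ fapp_tr.
Qed.

Definition eval_mx q (e : 'I_q -> 'rV[R]_n) (g : 'I_q -> 'cV[R]_n) : 'M[R]_(p, q) :=
  lin1_mx (fun z => \row_j fapp (g j) (e j *m pdiffv Y z)).

Lemma mul_eval_mx q e g z :
  z *m @eval_mx q e g = \row_j fapp (g j) (e j *m pdiffv Y z).
Proof.
apply: mul_rV_lin1_linear => a u v; apply/rowP => j.
by rewrite !mxE pdiffv_linear mulmxDr fappDl -scalemxAr fappZl.
Qed.

End ProjectionsOntoY.

(** * Chalmers-Metcalf operators *)

Section ChalmersMetcalf.
Variables (R : realType) (n : nat) (N : 'rV[R]_n -> R) (Y : 'M[R]_n) (s : seq 'rV[R]_n).
Hypotheses (hN : is_norm N) (hs : forall x, N x <= 1 <-> in_conv_hull s x).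
Variables (l : nat) (x : 'I_l -> 'rV[R]_n) (f : 'I_l -> 'cV[R]_n) (a : 'I_l -> R)
  (P0 : 'M[R]_n).
Local Notation T := (\sum_i a i *: tens (x i) (f i)).
Hypotheses (xf_ext : forall i, extreme (unit_ball N) (x i) /\ extreme (dual_ball N) (f i))
  (a_gt0 : forall i, 0 < a i) (a_sum1 : \sum_i a i = 1) (T_inv : (Y *m T <= Y)%MS)
  (P0_min : Pmin N Y P0) (P0_xf : forall i, fapp (f i) (x i *m P0) = opnorm N P0).
Local Notation p := (\rank (kermx Y^T) * \rank Y)%N.

Lemma Pmin_opnorm A : Pmin N Y A -> opnorm N A = opnorm N P0.
Proof. by move=> [_ ->]; case: P0_min. Qed.

Lemma Pmin_sub_pdiff A : Pmin N Y A -> exists M, A - P0 = pdiff Y M.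
Proof. by move=> [A_proj _]; case: P0_min => P0_proj _; apply: is_proj_diff. Qed.

(* [tr (A T)] does not depend on the projection [A]; it is an average of the
   [f_i (A x_i) <= ||A||] and equals [||P0|| = ||A||], so all of them are maximal. *)
Lemma Pmin_CM_norming A : Pmin N Y A -> forall i, fapp (f i) (x i *m A) = opnorm N A.
Proof.
move=> A_min; have [M AE] := Pmin_sub_pdiff A_min.
apply: (weighted_mean_eq_max (v := fun i => fapp (f i) (x i *m A)) a_gt0 a_sum1).
  move=> i; have [[x_ball _] [f_dual _]] := xf_ext i.
  exact: le_trans (dual_ball_le hN _ f_dual) (opnorm_ub hN hs _ x_ball).
rewrite -mxtrace_mul_tens_sum (Pmin_opnorm A_min).
have -> : A = pdiff Y M + P0 by rewrite -AE subrK.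
rewrite mulmxDl mxtraceD mxtrace_pdiff_mul // add0r mxtrace_mul_tens_sum.
under eq_bigr do rewrite P0_xf.
by rewrite -mulr_suml a_sum1 mul1r.
Qed.

Lemma Pmin_sub_ker A : Pmin N Y A ->
  (mxvec (A - P0) <= kermx (eval_mx Y x f) *m pdiff_mx Y)%MS.
Proof.
move=> A_min; have [M AE] := Pmin_sub_pdiff A_min.
have -> : mxvec (A - P0) = mxvec M *m pdiff_mx Y by rewrite mul_pdiff_mx /pdiffv mxvecK AE.
apply: submxMr; apply/sub_kermxP/rowP => i.
rewrite mul_eval_mx !mxE /pdiffv mxvecK -AE mulmxBr fappBl.
by rewrite Pmin_CM_norming // P0_xf (Pmin_opnorm A_min) subrr.
Qed.

Lemma CM_supported_weights (b : 'I_l -> R) :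
  (forall i, 0 <= b i) -> \sum_i b i = 1 ->
  (Y *m (\sum_i b i *: tens (x i) (f i)) <= Y)%MS ->
  CM_supported N Y #|[set i | 0 < b i]|.
Proof.
move=> b_ge0 b_sum1 Tb_inv; set J := [set i | 0 < b i].
have b_out i : i \notin J -> b i = 0.
  by rewrite inE -leNgt => b_le0; apply/eqP; rewrite eq_le b_le0 b_ge0.
exists (x \o enum_val), (f \o enum_val), (b \o enum_val), P0; split => //=.
- by move=> j; have := enum_valP j; rewrite inE.
- by rewrite (sum_enum_val (F := b)).
- rewrite (sum_enum_val (F := fun i => b i *: tens (x i) (f i))) //.
  by move=> i /b_out ->; rewrite scale0r.
Qed.

(* A kernel vector [b] with zero sum gives an invariant direction [S]; moving the
   weights [a] along [b] until one vanishes yields a Chalmers-Metcalf operator on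
   fewer pairs. *)
Lemma rank_eval_CM : (forall l', CM_supported N Y l' -> (l <= l')%N) ->
  (l <= \rank (eval_mx Y x f) + 1)%N.
Proof.
move=> l_min; rewrite leqNgt; apply/negP => /exists_ker_sum_eq0[b b_neq0 [bE0 b_sum0]].
pose S := \sum_i b 0 i *: tens (x i) (f i).
have S_inv : (Y *m S <= Y)%MS.
  apply: pdiff_trace_eq0 => M; rewrite mxtrace_mul_tens_sum.
  have : mxvec M *m eval_mx Y x f *m b^T = 0.
    by rewrite -mulmxA -[eval_mx _ _ _]trmxK -trmx_mul bE0 trmx0 mulmx0.
  move/matrixP/(_ 0 0); rewrite !mxE => sum0; rewrite -[RHS]sum0.
  by apply: eq_bigr => j _; rewrite mul_eval_mx !mxE /pdiffv mxvecK mulrC.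
have [i0 bi0] : exists i, b 0 i != 0.
  apply/existsP; apply: contraR b_neq0 => /existsPn b0.
  by apply/eqP/rowP => i; rewrite mxE; apply/eqP/negPn/b0.
have [t [a'_ge0 [j a'j0]]] :=
  exists_shrink_weights (b := fun i => b 0 i) a_gt0 (ex_intro _ i0 bi0) b_sum0.
pose J := [set i | 0 < a i - t * b 0 i].
have CMJ : CM_supported N Y #|J|.
  apply: CM_supported_weights => //.
    by rewrite sumrB a_sum1 -mulr_sumr b_sum0 mulr0 subr0.
  have -> : \sum_i (a i - t * b 0 i) *: tens (x i) (f i) = T - t *: S.
    by rewrite /S scaler_sumr -sumrB; apply: eq_bigr => i _; rewrite scalerBl scalerA.
  by rewrite mulmxBr addmx_sub ?eqmx_opp // -scalemxAr scalemx_sub.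
have : (#|J| < l)%N.
  rewrite -[X in (_ < X)%N]card_ord -cardsT; apply: proper_card; apply/properP.
  by split; [apply: finset.subsetT | exists j; rewrite ?inE // a'j0 ltxx].
by rewrite ltnNge l_min.
Qed.

Lemma rank_direction_le (W : 'M[R]_(n * n)) :
  (forall W' : 'M[R]_(n * n),
    (forall A, Pmin N Y A -> (mxvec (A - P0) <= W')%MS) -> (W <= W')%MS) ->
  (forall l', CM_supported N Y l' -> (l <= l')%N) -> (l + \rank W <= p + 1)%N.
Proof.
move=> W_min l_min; have := rank_eval_CM l_min; set E := eval_mx Y x f.
have W_sub : (W <= <<kermx E *m pdiff_mx Y>>)%MS.
  by apply: W_min => A A_min; rewrite genmxE; apply: Pmin_sub_ker.
have := mxrankS W_sub; rewrite mxrank_gen; have := mxrankM_maxl (kermx E) (pdiff_mx Y).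
have := rank_leq_row E; rewrite (mxrank_ker E); lia.
Qed.

Section NormingPairs.
Variables (P : 'M[R]_n) (q : nat) (e : 'I_q -> 'rV[R]_n) (g : 'I_q -> 'cV[R]_n).
Hypotheses (P_min : Pmin N Y P)
  (eg_norming : forall y h, norming_pair N P y h -> exists j, e j = y /\ g j = h).

(* The pairs of [T] are norming pairs of [P]; their weights give a kernel vector. *)
Lemma rank_eval_norming_lt : (\rank (eval_mx Y e g) < q)%N.
Proof.
have /fin_all_exists[idx idxE] i : exists j, e j = x i /\ g j = f i.
  apply: eg_norming; have [x_ext f_ext] := xf_ext i.
  by split => //; apply: Pmin_CM_norming.
pose gamma : 'cV[R]_q := \sum_i a i *: delta_mx (idx i) 0.
apply: (@rank_lt_mul_eq0 _ _ _ _ gamma).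
  have : \sum_j gamma j 0 = 1.
    rewrite -a_sum1 /gamma; under eq_bigr do rewrite summxE; rewrite exchange_big /=.
    apply: eq_bigr => i _; rewrite (bigD1 (idx i)) //= big1 => [|j ji]; rewrite !mxE.
      by rewrite !eqxx mulr1 addr0.
    by rewrite (negbTE ji) mulr0.
  move=> gamma_sum; apply/eqP => gamma0.
  have : \sum_j gamma j 0 = 0 by rewrite gamma0; apply: big1 => j _; rewrite mxE.
  by rewrite gamma_sum => /eqP; rewrite oner_eq0.
apply/colP => r; rewrite [RHS]mxE.
have -> : (eval_mx Y e g *m gamma) r 0 =
    ((delta_mx 0 r : 'rV_p) *m eval_mx Y e g *m gamma) 0 0.
  by rewrite -mulmxA -rowE [RHS]mxE.
rewrite /gamma mulmx_sumr summxE.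
rewrite -[RHS](mxtrace_pdiff_mul (vec_mx (delta_mx 0 r)) T_inv) mxtrace_mul_tens_sum.
apply: eq_bigr => i _; rewrite -scalemxAr -colE mxE [col _ _ _ _]mxE mul_eval_mx mxE.
by case: (idxE i) => -> ->.
Qed.

Lemma ker_eval_norming_sub (W : 'M[R]_(n * n)) :
  (forall A, Pmin N Y A -> (mxvec (A - P0) <= W)%MS) ->
  (kermx (eval_mx Y e g) *m pdiff_mx Y <= W)%MS.
Proof.
move=> W_Pmin; apply/row_subP => r; rewrite row_mul mul_pdiff_mx.
set z := row r _; have zE0 : z *m eval_mx Y e g = 0 by apply/sub_kermxP/row_sub.
have D0 y h : norming_pair N P y h -> fapp h (y *m pdiffv Y z) = 0.
  by move=> /eg_norming[j [<- <-]]; move/rowP/(_ j): zE0; rewrite mul_eval_mx !mxE.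
have [t t_gt0 Pt_le] := opnorm_perturb_le hN hs D0.
have Pt_min : Pmin N Y (P + t *: pdiffv Y z).
  apply: (Pmin_opnorm_le hN hs P0_min); last by rewrite -(Pmin_opnorm P_min).
  have -> : t *: pdiffv Y z = pdiff Y (t *: vec_mx z).
    by rewrite /pdiffv /pdiff -scalemxAr -scalemxAl.
  by apply: is_proj_add_pdiff; case: P_min.
have : (mxvec (P + t *: pdiffv Y z - P0) - mxvec (P - P0) <= W)%MS.
  by rewrite addmx_sub ?eqmx_opp ?W_Pmin.
rewrite -linearB /= opprB addrA subrK addrAC subrr add0r linearZ /=.
by rewrite eqmx_scale ?gt_eqF.
Qed.

Lemma rank_direction_ge (W : 'M[R]_(n * n)) :
  (forall A, Pmin N Y A -> (mxvec (A - P0) <= W)%MS) -> (p + 1 <= q + \rank W)%N.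
Proof.
move=> W_Pmin; have := mxrankS (ker_eval_norming_sub W_Pmin).
rewrite mxrankMfree ?pdiff_mx_free // (mxrank_ker (eval_mx Y e g)).
have := rank_eval_norming_lt; have := rank_leq_row (eval_mx Y e g); lia.
Qed.

End NormingPairs.
End ChalmersMetcalf.

Unset Implicit Arguments. Set Strict Implicit.

Theorem mainTheorem10 (R : realType) (n k : nat) (N : 'rV[R]_n -> R)
    (Y : 'M[R]_n) (l m : nat) :
  is_norm N -> polyhedral N ->
  \rank Y = k -> (1 <= k)%N -> (k <= n - 1)%N ->
  (* l: minimal number of pairs supporting a Chalmers-Metcalf operator for Y *)
  CM_supported N Y l ->
  (forall l', CM_supported N Y l' -> (l <= l')%N) ->
  (* m: minimal number of norming pairs of a minimal projection onto Y *)
  (exists P, Pmin N Y P /\ num_norming_pairs N P m) ->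
  (forall P c, Pmin N Y P -> num_norming_pairs N P c -> (m <= c)%N) ->
  exists d : nat, affdim (Pmin N Y) d /\
    ((k * (n - k))%:Z - m%:Z + 1 <= d%:Z)%R /\
    (d%:Z <= (k * (n - k))%:Z - l%:Z + 1)%R.
Proof.
move=> hN [s hs] rankY _ _ CM l_min [P [P_min [L [_ [sizeL L_norming]]]]] _.
have [x [f [a [P0 [xf_ext a_gt0 a_sum1 T_inv [P0_min P0_xf]]]]]] := CM.
pose Q (W : 'M[R]_(n * n)) := forall A, Pmin N Y A -> (mxvec (A - P0) <= W)%MS.
have [W [W_Pmin W_min]] : exists W, Q W /\ forall W', Q W' -> (W <= W')%MS.
  apply: exists_min_subspace => [A _|U V QU QV A A_min]; first exact: submx1.
  by rewrite sub_capmx QU ?QV.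
exists (\rank W); split; first by exists P0; split => //; exists W.
have L_index y h : norming_pair N P y h ->
    exists j : 'I_m, (L`_j).1 = y /\ (L`_j).2 = h.
  move=> /L_norming yhL; have j_lt : (index (y, h) L < m)%N by rewrite -sizeL index_mem.
  by exists (Ordinal j_lt); rewrite /= nth_index.
have := rank_direction_le hN hs xf_ext a_gt0 a_sum1 T_inv P0_min P0_xf W_min l_min.
have := rank_direction_ge hN hs xf_ext a_gt0 a_sum1 T_inv P0_min P0_xf P_min L_index W_Pmin.
rewrite rank_kermx_tr rankY mulnC; split; lia.
Qed.
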